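(* Let $H$ be a hyperbolic component of the Mandelbrot set $\mathfrak{M}$ different from the main cardioid, with associated angles $\theta_H^-<\theta_H^+$. Define the discontinuity locus \[\mathrm{Disc}(H)=\big\{\theta\in\mathbb{T} : I^{\circ}_{\theta_H^+}(\theta)\neq I^{\circ}_{\theta_H^-}(\theta)\big\}.\] Then \[\mathrm{Disc}(H)=\bigcup_{m\geq 1}\sigma^{-m}(\Pi_1(H)).\]
   Context: $\mathbb{T}=\mathbb{R}/\mathbb{Z}$ and $\sigma:\mathbb{T}\to\mathbb{T}$, $\sigma(\theta)=2\theta$, is the angle-doubling map. For $a,b\in\mathbb{T}$, the notations $(a,b)$, $[a,b]$, $[a,b)$, $(a,b]$ denote arcs of $\mathbb{T}$ traversed in the positive direction from $a$ to $b$. Let $\mathfrak{M}$ be the Mandelbrot set and $R_{\mathfrak{M}}(\theta)$ its external (parameter) ray of angle $\theta$. For a hyperbolic component $H$ of $\mathfrak{M}$ other than the main cardioid, with root point $r_H$, there are exactly two angles $0<\theta_H^-<\theta_H^+<1$ whose parameter rays land at $r_H$ (Douady–Hubbard). Set $\Pi_1(H)=[\theta_H^-,\theta_H^+]\subset\mathbb{T}$. For $\alpha\in\mathbb{T}$, the coding $I^{\circ}_{\alpha}:\mathbb{T}\to\{A,B,\circ\}^{\mathbb{N}}$ sends $\theta$ to $i_0i_1\cdots$ where, for $n\ge 0$, $i_n=A$ if $\sigma^n(\theta)\in(\frac{\alpha+1}{2},\frac{\alpha}{2})$, $i_n=B$ if $\sigma^n(\theta)\in(\frac{\alpha}{2},\frac{\alpha+1}{2})$,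 and $i_n=\circ$ if $\sigma^n(\theta)\in\{\frac{\alpha}{2},\frac{\alpha+1}{2}\}$. *)

From Stdlib Require Import Reals.
From Coquelicot Require Import Coquelicot.
Open Scope R_scope.

Definition fc (c z : C) : C := Cplus (Cmult z z) c.

Fixpoint fiter (c : C) (n : nat) (z : C) : C :=
  match n with O => z | S k => fc c (fiter c k z) end.

(** derivative of f_c^n at z : prod_{k<n} 2 f_c^k(z) *)
Fixpoint mult (c : C) (n : nat) (z : C) : C :=
  match n with
  | O => RtoC 1
  | S k => Cmult (mult c k z) (Cmult (RtoC 2) (fiter c k z))
  end.

Definition Mandel (c : C) : Prop :=
  exists B : R, forall n : nat, Cmod (fiter c n (RtoC 0)) <= B.

(** f_c^n has an attracting fixed point (an attracting cycle of period dividing n). *)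
Definition attracting_at (c : C) (n : nat) : Prop :=
  exists z : C, fiter c n z = z /\ Cmod (mult c n z) < 1.

Definition Hyp (c : C) : Prop := exists n : nat, (1 <= n)%nat /\ attracting_at c n.

Definition connected (S : C -> Prop) : Prop :=
  forall U V : C -> Prop, open U -> open V ->
    (forall x, S x -> U x \/ V x) ->
    (exists x, S x /\ U x) -> (exists x, S x /\ V x) ->
    exists x, S x /\ U x /\ V x.

Definition hyp_component (H : C -> Prop) : Prop :=
  (exists c, H c) /\ (forall c, H c -> Hyp c) /\ connected H /\
  (forall S : C -> Prop, connected S -> (forall c, H c -> S c) ->
     (forall c, S c -> Hyp c) -> forall c, S c -> H c).

Definition main_cardioid (H : C -> Prop) : Prop := hyp_component H /\ H (RtoC 0).

Definition hyp_period (H : C -> Prop) (n : nat) : Prop :=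
  (1 <= n)%nat /\ (forall c, H c -> attracting_at c n) /\
  (forall m, (1 <= m)%nat -> (forall c, H c -> attracting_at c m) -> (n <= m)%nat).

Definition in_boundary (H : C -> Prop) (r : C) : Prop :=
  ~ H r /\ forall eps : R, 0 < eps -> exists c, H c /\ Cmod (Cminus c r) < eps.

Definition is_root (H : C -> Prop) (r : C) : Prop :=
  in_boundary H r /\
  exists n, hyp_period H n /\ exists z, fiter r n z = z /\ mult r n z = RtoC 1.

(** Riemann map Phi_M : C \ M -> C \ closed unit disk, conformal iso,
    normalized by Phi_M(c)/c -> 1 at infinity (Douady–Hubbard). *)
Definition is_PhiM (Phi : C -> C) : Prop :=
  (forall c, ~ Mandel c -> 1 < Cmod (Phi c)) /\
  (forall c1 c2, ~ Mandel c1 -> ~ Mandel c2 -> Phi c1 = Phi c2 -> c1 = c2) /\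
  (forall w, 1 < Cmod w -> exists c, ~ Mandel c /\ Phi c = w) /\
  (forall c, ~ Mandel c -> ex_derive Phi c) /\
  (forall eps, 0 < eps -> exists R0, forall c, R0 < Cmod c -> ~ Mandel c ->
      Cmod (Cminus (Cdiv (Phi c) c) (RtoC 1)) < eps).

Definition polar (s theta : R) : C := (s * cos (2 * PI * theta), s * sin (2 * PI * theta)).

(** the parameter ray R_M(theta) = Phi^{-1}({s e^{2 pi i theta} : s > 1}) lands at r *)
Definition ray_lands (Phi : C -> C) (theta : R) (r : C) : Prop :=
  forall eps, 0 < eps -> exists delta, 0 < delta /\
    forall c s, ~ Mandel c -> 1 < s < 1 + delta -> Phi c = polar s theta ->
      Cmod (Cminus c r) < eps.

(** * The circle T = R/Z, represented by real numbers *)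
Definition frac (x : R) : R := x - IZR (up x) + 1.

Definition sigma_iter (n : nat) (theta : R) : R := frac (2 ^ n * theta).

(** x lies in the open arc (a,b) traversed positively from a to b *)
Definition in_open_arc (a b x : R) : Prop := 0 < frac (x - a) < frac (b - a).

Definition in_open_arc_dec (a b x : R) : {in_open_arc a b x} + {~ in_open_arc a b x}.
Proof.
  unfold in_open_arc.
  destruct (Rlt_dec 0 (frac (x - a))) as [h1|h1];
  destruct (Rlt_dec (frac (x - a)) (frac (b - a))) as [h2|h2];
  [left; split; assumption | right; intros [_ h]; contradiction
  | right; intros [h _]; contradiction | right; intros [h _]; contradiction].
Defined.

Inductive symb : Set := SA | SB | SO.

(** n-th letter of the coding I°_alpha(theta) *)
Definition coding (alpha theta : R) (n : nat) : symb :=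
  let x := sigma_iter n theta in
  if in_open_arc_dec ((alpha + 1) / 2) (alpha / 2) x then SA
  else if in_open_arc_dec (alpha / 2) ((alpha + 1) / 2) x then SB
  else SO.

Definition Disc (thm thp theta : R) : Prop :=
  exists n : nat, coding thp theta n <> coding thm theta n.

(* The two partitions of the circle by the diameters {a/2, (a+1)/2} and
   {b/2, (b+1)/2}, with 0 <= a < b < 1, assign the same letter to a point
   exactly outside the two closed arcs [a/2, b/2] and [(a+1)/2, (b+1)/2]
   (at the endpoints one of them assigns the letter o).  These two arcs form
   the preimage of [a, b] under doubling, so the codings of theta differ at
   position n iff sigma^(n+1)(theta) lies in [a, b]. *)

From Stdlib Require Import Reals Lra Lia.
From Coquelicot Require Import Coquelicot.
Open Scope R_scope.

Lemma frac_bounds y : 0 <= frac y < 1.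
Proof. unfold frac. destruct (archimed y). lra. Qed.

Lemma frac_unique y k : 0 <= y - IZR k < 1 -> frac y = y - IZR k.
Proof.
  intros hk. unfold frac.
  assert (hup : up y = (k + 1)%Z).
  { symmetry. apply tech_up; rewrite plus_IZR; simpl; lra. }
  rewrite hup, plus_IZR. simpl. lra.
Qed.

Lemma frac_id y : 0 <= y < 1 -> frac y = y.
Proof. intros hy. rewrite (frac_unique y 0); simpl; lra. Qed.

Lemma frac_sub_IZR y k : frac (y - IZR k) = frac y.
Proof.
  pose proof (frac_bounds y) as hy. unfold frac in hy.
  rewrite (frac_unique (y - IZR k) (up y - 1 - k)); unfold frac;
    rewrite !minus_IZR; simpl; lra.
Qed.

Lemma frac_double_frac y : frac (2 * frac y) = frac (2 * y).
Proof.
  replace (2 * frac y) with (2 * y - IZR (2 * (up y - 1))).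
  - apply frac_sub_IZR.
  - unfold frac. rewrite mult_IZR, minus_IZR. simpl. ring.
Qed.

Lemma sigma_iter_S n theta : sigma_iter (S n) theta = frac (2 * sigma_iter n theta).
Proof. unfold sigma_iter. rewrite frac_double_frac. f_equal. simpl. ring. Qed.

Lemma sigma_iter_bounds n theta : 0 <= sigma_iter n theta < 1.
Proof. apply frac_bounds. Qed.

Lemma frac_double_in_interval a b x : 0 <= a -> b < 1 -> 0 <= x < 1 ->
  (a <= frac (2 * x) <= b <-> a / 2 <= x <= b / 2 \/ (a + 1) / 2 <= x <= (b + 1) / 2).
Proof.
  intros ha hb hx.
  destruct (Rlt_le_dec x (1 / 2)) as [hlo | hhi].
  - rewrite frac_id by lra. lra.
  - rewrite (frac_unique (2 * x) 1); simpl; lra.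
Qed.

Lemma in_open_arc_iff a b x : 0 <= a < 1 -> 0 <= b < 1 -> 0 <= x < 1 ->
  (in_open_arc a b x <-> (a <= b /\ a < x < b) \/ (b < a /\ (a < x \/ x < b))).
Proof.
  intros ha hb hx. unfold in_open_arc.
  destruct (Rle_lt_dec a b) as [hab | hab];
    [ rewrite (frac_unique (b - a) 0) by (simpl; lra)
    | rewrite (frac_unique (b - a) (-1)) by (simpl; lra) ];
  (destruct (Rle_lt_dec a x) as [hax | hax];
    [ rewrite (frac_unique (x - a) 0) by (simpl; lra)
    | rewrite (frac_unique (x - a) (-1)) by (simpl; lra) ]);
  simpl; lra.
Qed.

Inductive coding_spec (alpha x : R) : symb -> Prop :=
  | CodingA : x < alpha / 2 \/ (alpha + 1) / 2 < x -> coding_spec alpha x SA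
  | CodingB : alpha / 2 < x < (alpha + 1) / 2 -> coding_spec alpha x SB
  | CodingO : x = alpha / 2 \/ x = (alpha + 1) / 2 -> coding_spec alpha x SO.

Lemma codingP alpha theta n : 0 <= alpha < 1 ->
  coding_spec alpha (sigma_iter n theta) (coding alpha theta n).
Proof.
  intros halpha. unfold coding.
  pose proof (sigma_iter_bounds n theta) as hx.
  set (x := sigma_iter n theta) in *.
  destruct in_open_arc_dec as [hA | hA];
    [| destruct in_open_arc_dec as [hB | hB]].
  - apply CodingA. apply in_open_arc_iff in hA; lra.
  - apply CodingB. apply in_open_arc_iff in hB; lra.
  - apply CodingO. rewrite !in_open_arc_iff in hA, hB by lra. lra.
Qed.

Lemma coding_neq_iff a b theta n : 0 <= a -> a < b -> b < 1 ->
  coding b theta n <> coding a theta n <->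
  a / 2 <= sigma_iter n theta <= b / 2 \/
  (a + 1) / 2 <= sigma_iter n theta <= (b + 1) / 2.
Proof.
  intros ha hab hb.
  destruct (codingP b theta n ltac:(lra)), (codingP a theta n ltac:(lra));
    (split; [intros hne | intros hx heq]); first [congruence | lra].
Qed.

Lemma coding_neq_iff_sigma_iter_S a b theta n : 0 <= a -> a < b -> b < 1 ->
  coding b theta n <> coding a theta n <-> a <= sigma_iter (S n) theta <= b.
Proof.
  intros ha hab hb.
  rewrite coding_neq_iff, sigma_iter_S, frac_double_in_interval by
    (try apply sigma_iter_bounds; lra).
  reflexivity.
Qed.

Theorem lemma2p4 (Phi : C -> C) (H : C -> Prop) (r : C) (thm thp : R) :
  is_PhiM Phi ->
  hyp_component H -> ~ H (RtoC 0) ->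
  is_root H r ->
  0 < thm -> thm < thp -> thp < 1 ->
  (forall theta, 0 <= theta < 1 -> (ray_lands Phi theta r <-> theta = thm \/ theta = thp)) ->
  forall theta : R, 0 <= theta < 1 ->
    (Disc thm thp theta <->
     exists m : nat, (1 <= m)%nat /\ thm <= sigma_iter m theta <= thp).
Proof.
  intros _ _ _ _ hthm hlt hthp _ theta _.
  assert (hdiff : forall n, coding thp theta n <> coding thm theta n <->
                            thm <= sigma_iter (S n) theta <= thp)
    by (intros n; apply coding_neq_iff_sigma_iter_S; lra).
  unfold Disc. split.
  - intros [n hn]. exists (S n). split; [lia | apply hdiff, hn].
  - intros [[| n] [hm hs]]; [lia |]. exists n. apply hdiff, hs.
Qed.
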